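(* Let $\mathbb{X},\mathbb{Y}$ be real Banach spaces and let $T:\mathbb{X}\to\mathbb{Y}$ be a bounded linear operator that preserves Birkhoff–James orthogonality at a point $x\in\mathbb{X}$. If $Tx$ is a smooth point of $\mathbb{Y}$, then $x$ is a smooth point of $\mathbb{X}$.
   Context: All spaces are real Banach spaces. For $u,v\in\mathbb{X}$, $u$ is Birkhoff–James orthogonal to $v$, written $u\perp_B v$, if $\|u+\lambda v\|\ge\|u\|$ for all $\lambda\in\mathbb{R}$. A bounded linear operator $T$ preserves Birkhoff–James orthogonality at $x$ if for all $v\in\mathbb{X}$, $x\perp_B v$ implies $Tx\perp_B Tv$. For non-zero $z$, $J(z)=\{f\in\mathbb{X}^*:\|f\|=1,\ f(z)=\|z\|\}$; a non-zero $z$ is smooth if $J(z)$ is a singleton (equivalently $\dim\operatorname{span}J(z)=1$). *)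

From HB Require Import structures.
From mathcomp Require Import all_boot all_order all_algebra.
From mathcomp Require Import all_classical all_reals all_analysis.
Set Implicit Arguments. Unset Strict Implicit. Unset Printing Implicit Defensive.
Import Order.TTheory GRing.Theory Num.Theory.
Import numFieldNormedType.Exports.
Local Open Scope ring_scope.
Local Open Scope classical_set_scope.

Section BJ.
Variable R : realType.

Definition is_linear (U V : normedModType R) (f : U -> V) : Prop :=
  forall (a : R) (u v : U), f (a *: u + v) = a *: f u + f v.

Definition bounded_linear (U V : normedModType R) (T : U -> V) : Prop :=
  is_linear T /\ exists M : R, forall u : U, `|T u| <= M * `|u|.

Definition BJ_orth (U : normedModType R) (u v : U) : Prop :=
  forall lambda : R, `|u| <= `|u + lambda *: v|.

Definition preserves_BJ_at (U V : normedModType R) (T : U -> V) (x : U) : Prop :=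
  forall v : U, BJ_orth x v -> BJ_orth (T x) (T v).

(* f in X^* with operator norm exactly 1:
   1 is a bound for f and every bound M of f satisfies 1 <= M *)
Definition unit_functional (U : normedModType R) (f : U -> R) : Prop :=
  bounded_linear (f : U -> R^o) /\
  (forall u : U, `|f u| <= `|u|) /\
  (forall M : R, (forall u : U, `|f u| <= M * `|u|) -> 1 <= M).

Definition Jset (U : normedModType R) (z : U) : set (U -> R) :=
  [set f | unit_functional f /\ f z = `|z|].

Definition smooth_point (U : normedModType R) (z : U) : Prop :=
  z != 0 /\ exists f : U -> R, Jset z = [set f].

End BJ.

From HB Require Import structures.
From mathcomp Require Import all_boot all_order all_algebra.
From mathcomp Require Import all_classical all_reals all_analysis.
From mathcomp Require Import ring lra.
Set Implicit Arguments. Unset Strict Implicit. Unset Printing Implicit Defensive.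
Import Order.TTheory GRing.Theory Num.Theory.
Import numFieldNormedType.Exports.
Local Open Scope ring_scope.
Local Open Scope classical_set_scope.

(** If [x] is orthogonal to [v] then [T x] is orthogonal to [T v], and by
    Hahn-Banach orthogonality at [T x] is witnessed by a support functional
    vanishing at [T v]; smoothness makes that functional the unique [g] in
    [J(T x)].  For [f] in [J(x)], the vector [u - (f u / |x|) x] lies in the
    kernel of [f], hence is orthogonal to [x]; so [g] kills its image, i.e.
    [f u = |x| / |T x| * g (T u)].  Thus [J(x)], which is nonempty by
    Hahn-Banach, has a single element. *)

(** Partial functionals are encoded by their graphs [G : set (Y * R)], which
    avoids introducing subspaces: the domain of [G] is a subspace as soon as
    [G] is linear and contains [(0, 0)]. *)
Section GraphHahnBanach.
Variables (R : realType) (Y : normedModType R).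

Definition graph_functional (G : set (Y * R)) :=
  forall y a b, G (y, a) -> G (y, b) -> a = b.

Definition graph_linear (G : set (Y * R)) :=
  forall l y z a b, G (y, a) -> G (z, b) -> G (l *: y + z, l * a + b).

Definition graph_norm_dominated (G : set (Y * R)) :=
  forall y a, G (y, a) -> a <= `|y|.

Lemma graph_linearZ (G : set (Y * R)) (l : R) (y : Y) (a : R) :
  graph_linear G -> G (0, 0) -> G (y, a) -> G (l *: y, l * a).
Proof. by move=> Glin G0 Gy; have := Glin l _ _ _ _ Gy G0; rewrite !addr0. Qed.

Section OneStepExtension.
Variables (A : set (Y * R)) (y0 : Y) (c : R).
Hypotheses (Afun : graph_functional A) (Alin : graph_linear A)
  (Adom : graph_norm_dominated A) (A0 : A (0, 0)).

Definition graph_extend := [set p : Y * R |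
  exists z a t, A (z, a) /\ p = (z + t *: y0, a + t * c)].

Lemma graph_extend_functional :
  ~ (exists a, A (y0, a)) -> graph_functional graph_extend.
Proof.
move=> y0A y a b [z1 [a1 [t1 [Az1 [-> ->]]]]] [z2 [a2 [t2 [Az2 [e ->]]]]].
have [t12|t12] := eqVneq t1 t2.
  by subst t2; move/addIr: e => ez; move: Az2; rewrite -ez => /(Afun Az1) ->.
exfalso; apply: y0A.
have e2 : (t1 - t2) *: y0 = z2 - z1.
  rewrite scalerBl -(addrKA z1 (t1 *: y0)) -(addrKA (t2 *: y0) z2 z1).
  by rewrite (addrC _ z1) e (addrC z1).
have t12' : t1 - t2 != 0 by rewrite subr_eq0.
exists ((t1 - t2)^-1 * (-1 * a1 + a2)).
have -> : y0 = (t1 - t2)^-1 *: (-1 *: z1 + z2).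
  by rewrite scaleN1r (addrC (- z1)) -e2 scalerA mulVf // scale1r.
by apply: graph_linearZ => //; exact: Alin.
Qed.

Lemma graph_extend_linear : graph_linear graph_extend.
Proof.
move=> l y z a b [z1 [a1 [t1 [Az1 [-> ->]]]]] [z2 [a2 [t2 [Az2 [-> ->]]]]].
exists (l *: z1 + z2), (l * a1 + a2), (l * t1 + t2); split; first exact: Alin.
congr pair; first by rewrite scalerDr scalerA addrACA -scalerDl.
by rewrite mulrDr mulrA addrACA -mulrDl.
Qed.

Lemma graph_extend_dominated :
  (forall z a, A (z, a) -> a - `|z - y0| <= c) ->
  (forall w b, A (w, b) -> c <= `|w + y0| - b) ->
  graph_norm_dominated graph_extend.
Proof.
move=> cge cle y a [z [a' [t [Az [-> ->]]]]].
have [t0|t0|->] := ltgtP t 0; last by rewrite scale0r mul0r !addr0; exact: Adom.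
- have s0 : 0 < - t by rewrite oppr_gt0.
  have := cge _ _ (graph_linearZ (- t)^-1 Alin A0 Az).
  rewrite -(ler_pM2l s0) mulrBr mulrA mulfV ?gt_eqF // mul1r.
  rewrite -[X in X * `|_|](gtr0_norm s0) -normrZ scalerBr scalerA.
  rewrite mulfV ?gt_eqF // scale1r scaleNr opprK; lra.
- have := cle _ _ (graph_linearZ t^-1 Alin A0 Az).
  rewrite -(ler_pM2l t0) mulrBr mulrA mulfV ?gt_eqF // mul1r.
  rewrite -[X in X * `|_|](gtr0_norm t0) -normrZ scalerDr scalerA.
  rewrite mulfV ?gt_eqF // scale1r; lra.
Qed.

Lemma graph_extend_proper : ~ (exists a, A (y0, a)) -> A `<` graph_extend.
Proof.
move=> y0A; split.
  by move=> [z a] Az; exists z, a, 0; rewrite scale0r mul0r !addr0.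
move=> ext; apply: y0A; exists c; apply: ext; exists 0, 0, 1.
by rewrite scale1r mul1r !add0r.
Qed.

End OneStepExtension.

(* [c] is squeezed between [sup (a - |z - y0|)] and [inf (|w + y0| - b)],
   which are ordered by the triangle inequality [|z + w| <= |z - y0| + |w + y0|]. *)
Lemma graph_extension_step (A : set (Y * R)) (y0 : Y) :
  graph_functional A -> graph_linear A -> graph_norm_dominated A -> A (0, 0) ->
  ~ (exists a, A (y0, a)) ->
  exists B, [/\ graph_functional B, graph_linear B, graph_norm_dominated B
              & A `<` B].
Proof.
move=> Afun Alin Adom A0 y0A.
pose S := [set r : R | exists z a, A (z, a) /\ r = a - `|z - y0|].
have S_le : forall z a w b, A (z, a) -> A (w, b) ->
    a - `|z - y0| <= `|w + y0| - b.
  move=> z a w b Az Aw.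
  have := Adom _ _ (Alin 1 _ _ _ _ Az Aw); rewrite scale1r mul1r => zw.
  have : `|z + w| <= `|z - y0| + `|w + y0|.
    have -> : z + w = (z - y0) + (w + y0) by rewrite addrACA addNr addr0.
    exact: ler_normD.
  lra.
have cge : forall z a, A (z, a) -> a - `|z - y0| <= sup S.
  move=> z a Az; apply: ub_le_sup; last by exists z, a.
  by exists (`|0 + y0| - 0) => r [z' [a' [Az' ->]]]; exact: S_le.
have cle : forall w b, A (w, b) -> sup S <= `|w + y0| - b.
  move=> w b Aw; apply: ge_sup; first by exists (0 - `|0 - y0|), 0, 0.
  by move=> r [z' [a' [Az' ->]]]; exact: S_le.
exists (graph_extend A y0 (sup S)); split.
- exact: graph_extend_functional.
- exact: graph_extend_linear.
- exact: graph_extend_dominated.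
- exact: graph_extend_proper.
Qed.

(* The alternative [G = set0] makes the union of the empty chain admissible. *)
Definition partial_dominated_extension (G0 G : set (Y * R)) :=
  [/\ graph_functional G, graph_linear G, graph_norm_dominated G
    & G0 `<=` G \/ G = set0].

Lemma chain_partial_dominated_extension (G0 : set (Y * R))
    (F : set (set (Y * R))) :
  F `<=` partial_dominated_extension G0 -> total_on F subset ->
  partial_dominated_extension G0 (\bigcup_(G in F) G).
Proof.
move=> FP tot; split.
- move=> y a b [G1 FG1 G1a] [G2 FG2 G2b].
  have [s|s] := tot _ _ FG1 FG2.
    by have [f _ _ _] := FP _ FG2; apply: f (s _ G1a) G2b.
  by have [f _ _ _] := FP _ FG1; apply: f G1a (s _ G2b).
- move=> l y z a b [G1 FG1 G1a] [G2 FG2 G2b].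
  have [s|s] := tot _ _ FG1 FG2.
    by have [_ f _ _] := FP _ FG2; exists G2 => //; apply: f (s _ G1a) G2b.
  by have [_ f _ _] := FP _ FG1; exists G1 => //; apply: f G1a (s _ G2b).
- by move=> y a [G FG Ga]; have [_ _ f _] := FP _ FG; apply: f.
- have [[G FG [p Gp]]|nF] := pselect (exists2 G, F G & G !=set0).
    have [_ _ _ [s|e]] := FP _ FG; first by left => q /s q1; exists G.
    by rewrite e in Gp.
  right; apply/seteqP; split => // p [G FG Gp].
  by apply: nF; exists G => //; exists p.
Qed.

Lemma graph_hahn_banach (G0 : set (Y * R)) :
  graph_functional G0 -> graph_linear G0 -> graph_norm_dominated G0 ->
  G0 (0, 0) ->
  exists f : Y -> R, [/\ forall l u v, f (l *: u + v) = l * f u + f v,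
    forall y, f y <= `|y| & forall y a, G0 (y, a) -> f y = a].
Proof.
move=> G0fun G0lin G0dom G00.
have [A [[Afun Alin Adom A_G0] Amax]] :=
  Zorn_bigcup (@chain_partial_dominated_extension G0).
have G0A : G0 `<=` A.
  case: A_G0 => // A0; exfalso; apply: (Amax G0); last by split => //; left.
  by rewrite A0; split => // /(_ _ G00).
have Atotal : forall y, exists a, A (y, a).
  move=> y; apply: contrapT => yA.
  have [B [Bfun Blin Bdom AB]] :=
    graph_extension_step Afun Alin Adom (G0A _ G00) yA.
  apply: (Amax B AB); split => //; left => p /G0A; exact: (properW AB).
have [f Af] := choice Atotal.
exists f; split.
- by move=> l u v; apply: Afun _ _ _ (Af _) (Alin l _ _ _ _ (Af u) (Af v)).
- by move=> y; apply: Adom _ _ (Af y).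
- by move=> y a G0y; apply: Afun _ _ _ (Af y) (G0A _ G0y).
Qed.

End GraphHahnBanach.

Section SupportFunctionals.
Variables (R : realType) (U : normedModType R).

Lemma Jset_linear (z : U) (f : U -> R) :
  Jset z f -> forall l u v, f (l *: u + v) = l * f u + f v.
Proof. by move=> [[[flin _] _] _]. Qed.

Lemma Jset_norm (z : U) (f : U -> R) : Jset z f -> forall u, `|f u| <= `|u|.
Proof. by move=> [[_ []]]. Qed.

Lemma Jset_eval (z : U) (f : U -> R) : Jset z f -> f z = `|z|.
Proof. by move=> []. Qed.

Lemma dominated_linear_Jset (z : U) (f : U -> R) :
  z != 0 -> (forall l u v, f (l *: u + v) = l * f u + f v) ->
  (forall u, f u <= `|u|) -> f z = `|z| -> Jset z f.
Proof.
move=> z0 flin fdom fz.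
have f0 : f 0 = 0 by have := flin 1 0 0; rewrite scale1r addr0 mul1r; lra.
have fnorm : forall u, `|f u| <= `|u|.
  move=> u; rewrite ler_norml fdom andbT.
  have := fdom (-1 *: u + 0); rewrite flin f0 !addr0 scaleN1r normrN; lra.
split=> //; split; first by split=> //; exists 1 => u; rewrite mul1r.
split=> // M fM; have := fM z; rewrite fz normr_id.
by rewrite -[X in X <= _]mul1r ler_pM2r ?normr_gt0.
Qed.

(* James' characterisation: [y] is orthogonal to [w] iff some support
   functional at [y] vanishes at [w]; here the functional [a y + b w |-> a |y|]
   is norm-dominated precisely because of the orthogonality. *)
Lemma BJ_orth_support (y w : U) :
  y != 0 -> BJ_orth y w -> exists f : U -> R, Jset y f /\ f w = 0.
Proof.
move=> y0 yw.
have ny : 0 < `|y| by rewrite normr_gt0.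
have span_dom : forall a b : R, `|a| * `|y| <= `|a *: y + b *: w|.
  move=> a b; have [->|a0] := eqVneq a 0; first by rewrite normr0 mul0r.
  have -> : a *: y + b *: w = a *: (y + (a^-1 * b) *: w).
    by rewrite scalerDr scalerA mulrA mulfV // mul1r.
  by rewrite normrZ ler_pM2l ?normr_gt0.
pose G := [set p : U * R | exists a b : R, p = (a *: y + b *: w, a * `|y|)].
have [f [flin fdom fG]] : exists f : U -> R,
    [/\ forall l u v, f (l *: u + v) = l * f u + f v,
        forall u, f u <= `|u| & forall u a, G (u, a) -> f u = a].
  apply: graph_hahn_banach.
  - move=> u a b [a1 [b1 [-> ->]]] [a2 [b2 [e ->]]].
    have : `|a1 - a2| * `|y| <= 0.
      have := span_dom (a1 - a2) (b1 - b2).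
      by rewrite !scalerBl addrACA -opprD e subrr normr0.
    by rewrite pmulr_lle0 // normr_le0 subr_eq0 => /eqP ->.
  - move=> l u v a b [a1 [b1 [-> ->]]] [a2 [b2 [-> ->]]].
    exists (l * a1 + a2), (l * b1 + b2); congr pair.
      by rewrite scalerDr !scalerA addrACA -!scalerDl.
    by rewrite mulrDl mulrA.
  - move=> u a [a1 [b1 [-> ->]]].
    by apply: le_trans (span_dom a1 b1); rewrite ler_wpM2r // ler_norm.
  - by exists 0, 0; rewrite !scale0r addr0 mul0r.
exists f; split; last by apply: fG; exists 0, 1; rewrite scale0r scale1r add0r mul0r.
apply: dominated_linear_Jset => //.
by apply: fG; exists 1, 0; rewrite scale1r scale0r addr0 mul1r.
Qed.

Lemma Jset_kernel_BJ_orth (x v : U) (f : U -> R) :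
  Jset x f -> f v = 0 -> BJ_orth x v.
Proof.
move=> fJ fv l; rewrite -(Jset_eval fJ); apply: le_trans (Jset_norm fJ _).
by rewrite addrC (Jset_linear fJ) fv mulr0 add0r ler_norm.
Qed.

Lemma smooth_point_BJ_orth (y w : U) (g : U -> R) :
  smooth_point y -> Jset y g -> BJ_orth y w -> g w = 0.
Proof.
move=> [y0 [g' Jy]] gJ yw; have [f [fJ <-]] := BJ_orth_support y0 yw.
by move: fJ gJ; rewrite Jy => -> ->.
Qed.

End SupportFunctionals.

Lemma is_linear0 (R : realType) (U V : normedModType R) (T : U -> V) :
  is_linear T -> T 0 = 0.
Proof.
by move=> Tlin; have := Tlin 1 0 0; rewrite !scale1r addr0 -{1}[T 0]addr0 => /addrI.
Qed.

Lemma preserves_BJ_Jset_comp (R : realType) (X Y : normedModType R)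
    (T : X -> Y) (x : X) (f : X -> R) (g : Y -> R) :
  is_linear T -> preserves_BJ_at T x -> smooth_point (T x) ->
  Jset x f -> Jset (T x) g -> forall u, f u * `|T x| = `|x| * g (T u).
Proof.
move=> Tlin pres Tx_smooth fJ gJ u.
have nx : `|x| != 0.
  by rewrite normr_eq0; apply: contraNneq Tx_smooth.1 => ->; rewrite is_linear0.
pose v := - (f u / `|x|) *: x + u.
have fv : f v = 0.
  by rewrite (Jset_linear fJ) (Jset_eval fJ) mulNr divfK // addNr.
have := smooth_point_BJ_orth Tx_smooth gJ (pres _ (Jset_kernel_BJ_orth fJ fv)).
rewrite Tlin (Jset_linear gJ) (Jset_eval gJ) => e.
have -> : g (T u) = f u / `|x| * `|T x| by rewrite mulNr in e; lra.
by field.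
Qed.

Theorem mainTheorem1 (R : realType) (X Y : completeNormedModType R)
  (T : X -> Y) (x : X) :
  bounded_linear T -> preserves_BJ_at T x ->
  smooth_point (T x) -> smooth_point x.
Proof.
move=> [Tlin _] pres Tx_smooth.
have [Tx0 [g Jg]] := Tx_smooth.
have gJ : Jset (T x) g by rewrite Jg.
have x0 : x != 0 by apply: contraNneq Tx0 => ->; rewrite is_linear0.
have [f [fJ _]] : exists f, Jset x f /\ f 0 = 0.
  by apply: BJ_orth_support => // l; rewrite scaler0 addr0.
have comp := preserves_BJ_Jset_comp Tlin pres Tx_smooth _ gJ.
split=> //; exists f; apply/seteqP; split=> [h hJ|_ ->] //=.
have nTx : `|T x| != 0 by rewrite normr_eq0.
by apply/funext => u; apply: (mulIf nTx); rewrite (comp _ hJ) (comp _ fJ).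
Qed.
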